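(* Let $(G,r,k,c,\pi)$ be an instance of $k$-PCST with optimal value $\mathrm{OPT}$, and run the algorithm $\mathcal{A}$ described below on it. If $\mathcal{A}$ terminates at Step 3, then its output $F_{\mathrm{OUT}}=(V_{\mathrm{OUT}},E_{\mathrm{OUT}})$ is a feasible solution of the $k$-PCST instance and satisfies \[ \sum_{e\in E_{\mathrm{OUT}}}c(e)+\sum_{v\notin V_{\mathrm{OUT}}}\pi(v)\le 4\,\mathrm{OPT}. \]
   Context: An instance of $k$-PCST consists of an undirected connected graph $G=(V,E)$, a root $r\in V$, an integer $k$, a nonnegative edge cost $c:E\to\mathbb{R}_+$ and a nonnegative penalty $\pi:V\to\mathbb{R}_+$. A feasible solution is a subtree $F=(V_F,E_F)$ of $G$ with $r\in V_F$ and $|V_F|\ge k$, of cost $\sum_{e\in E_F}c(e)+\sum_{v\in V\setminus V_F}\pi(v)$; $\mathrm{OPT}$ is the minimum cost. The PCST instance $(G,r,c,\pi)$ is the same problem without the constraint $|V_F|\ge k$; the rooted $k$-MST instance $(G,r,k,c)$ asks for a subtree containing $r$ with at least $k$ vertices minimizing total edge cost. Procedure 1 is the Goemans–Williamson primal-dual algorithm for PCST, which returns a subtree $F=(V_F,E_F)$ containing $r$ whose PCST cost is at most $2$ times the optimal PCST value. Procedure 2 is Garg's primal-dual algorithm for rooted $k$-MST, which returns a subtree containing $r$ with at least $k$ vertices whose edge cost is at most $2$ times the optimal rooted $k$-MST value. Algorithm $\mathcal{A}$: Step 1: apply Procedure 1 to $(G,r,c,\pi)$ obtaining $F_{\mathrm{PCST}}=(V_{\mathrm{PCST}},E_{\mathrm{PCST}})$;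 if $|V_{\mathrm{PCST}}|\ge k$, return $F_{\mathrm{PCST}}$; otherwise go to Step 2. Step 2: apply Procedure 2 to $(G,r,k,c)$ obtaining $F_{k\text{-MST}}=(V_{k\text{-MST}},E_{k\text{-MST}})$. Step 3: form the graph $G'=(V_{\mathrm{PCST}}\cup V_{k\text{-MST}},E_{\mathrm{PCST}}\cup E_{k\text{-MST}})$, compute a minimum spanning tree $F_{\mathrm{OUT}}$ of $G'$ with respect to $c$, and return it (termination at Step 3). *)

From HB Require Import structures.
From mathcomp Require Import all_boot all_order all_algebra.
Set Implicit Arguments. Unset Strict Implicit. Unset Printing Implicit Defensive.
Import Order.TTheory GRing.Theory Num.Theory.
Local Open Scope ring_scope.

(* An undirected (multi)graph: vertex type V, edge type E, each edge e has
   endpoints src e and dst e (orientation irrelevant). A subgraph is a pair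
   (VF : {set V}, EF : {set E}). *)
Section Graphs.
Variables (V E : finType) (src dst : E -> V).

Definition adj (EF : {set E}) : rel V := fun x y =>
  [exists e in EF, ((src e == x) && (dst e == y)) || ((src e == y) && (dst e == x))].

Definition is_subgraph (VF : {set V}) (EF : {set E}) : Prop :=
  forall e, e \in EF -> src e \in VF /\ dst e \in VF.

Definition connected_sub (VF : {set V}) (EF : {set E}) : Prop :=
  forall x y, x \in VF -> y \in VF -> connect (adj EF) x y.

(* EF has no cycle: no edge e of EF lies on a cycle, i.e. its endpoints are
   not connected using the other edges of EF (loops are thus excluded) *)
Definition acyclic_sub (EF : {set E}) : Prop :=
  forall e, e \in EF -> ~~ connect (adj (EF :\ e)) (src e) (dst e).

Definition is_subtree (VF : {set V}) (EF : {set E}) : Prop :=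
  [/\ is_subgraph VF EF, VF != set0, connected_sub VF EF & acyclic_sub EF].

Definition graph_connected : Prop := connected_sub setT setT.
End Graphs.

Section Costs.
Variables (R : realFieldType) (V E : finType).

Definition edge_cost (c : E -> R) (EF : {set E}) : R := \sum_(e in EF) c e.

Definition pcst_cost (c : E -> R) (pi : V -> R) (VF : {set V}) (EF : {set E}) : R :=
  edge_cost c EF + \sum_(v in ~: VF) pi v.
End Costs.

Definition kpcst_feasible (V E : finType) (src dst : E -> V) (r : V) (k : nat)
  (VF : {set V}) (EF : {set E}) : Prop :=
  [/\ is_subtree src dst VF EF, r \in VF & (k <= #|VF|)%N].

From HB Require Import structures.
From mathcomp Require Import all_boot all_order all_algebra.
Set Implicit Arguments. Unset Strict Implicit. Unset Printing Implicit Defensive.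
Import Order.TTheory GRing.Theory Num.Theory.
Local Open Scope ring_scope.

(* The edges of F_OUT come from the two trees, so its edge cost is at most
   c(E_PCST) + c(E_kMST), while it covers every vertex of V_PCST, so its
   penalty is at most that of F_PCST.  Hence cost(F_OUT) <= cost(F_PCST) +
   c(E_kMST) <= 2 OPT + 2 OPT, because the PCST optimum and the k-MST optimum
   are both bounded by OPT (an optimal k-PCST tree is feasible for each). *)

Section NonnegSums.
Variables (R : realFieldType) (T : finType) (f : T -> R).
Hypothesis f_ge0 : forall x, 0 <= f x.

Lemma ler_sum_subset (A B : {set T}) :
  A \subset B -> \sum_(x in A) f x <= \sum_(x in B) f x.
Proof.
move=> sAB; rewrite [X in _ <= X](big_setID A) (setIidPr sAB) /=.
by rewrite lerDl sumr_ge0.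
Qed.

Lemma ler_sum_setU (A B : {set T}) :
  \sum_(x in A :|: B) f x <= \sum_(x in A) f x + \sum_(x in B) f x.
Proof.
rewrite (big_setID A) setUK setDUl setDv set0U /=.
by rewrite lerD2l ler_sum_subset // subsetDl.
Qed.

End NonnegSums.

Section CostBounds.
Variables (R : realFieldType) (V E : finType) (c : E -> R) (pi : V -> R).
Hypotheses (c_ge0 : forall e, 0 <= c e) (pi_ge0 : forall v, 0 <= pi v).

Lemma edge_cost_le_pcst_cost (VF : {set V}) (EF : {set E}) :
  edge_cost c EF <= pcst_cost c pi VF EF.
Proof. by rewrite /pcst_cost lerDl sumr_ge0. Qed.

Lemma pcst_cost_setU_le (VP VK : {set V}) (EP EK EO : {set E}) :
  EO \subset EP :|: EK ->
  pcst_cost c pi (VP :|: VK) EO <= pcst_cost c pi VP EP + edge_cost c EK.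
Proof.
move=> sEO; rewrite /pcst_cost addrAC lerD //.
  exact: le_trans (ler_sum_subset c_ge0 sEO) (ler_sum_setU c_ge0 EP EK).
by rewrite ler_sum_subset // setCS subsetUl.
Qed.

End CostBounds.

Theorem theorem2 (R : realFieldType) (V E : finType) (src dst : E -> V)
  (r : V) (k : nat) (c : E -> R) (pi : V -> R)
  (* the k-PCST instance *)
  (HG : graph_connected src dst)
  (Hc : forall e, 0 <= c e) (Hpi : forall v, 0 <= pi v)
  (* Step 1: output of Procedure 1 (2-approximation for PCST (G,r,c,pi)) *)
  (VP : {set V}) (EP : {set E})
  (HP_tree : is_subtree src dst VP EP) (HP_root : r \in VP)
  (HP_apx : forall (VT : {set V}) (ET : {set E}),
      is_subtree src dst VT ET -> r \in VT ->
      pcst_cost c pi VP EP <= 2 * pcst_cost c pi VT ET)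
  (* A does not stop at Step 1 *)
  (HP_small : (#|VP| < k)%N)
  (* Step 2: output of Procedure 2 (2-approximation for rooted k-MST (G,r,k,c)) *)
  (VK : {set V}) (EK : {set E})
  (HK_tree : is_subtree src dst VK EK) (HK_root : r \in VK)
  (HK_size : (k <= #|VK|)%N)
  (HK_apx : forall (VT : {set V}) (ET : {set E}),
      is_subtree src dst VT ET -> r \in VT -> (k <= #|VT|)%N ->
      edge_cost c EK <= 2 * edge_cost c ET)
  (* Step 3: F_OUT = (VO, EO) is a minimum spanning tree of
     G' = (VP :|: VK, EP :|: EK) w.r.t. c *)
  (VO : {set V}) (EO : {set E})
  (HO_V : VO = VP :|: VK) (HO_E : EO \subset EP :|: EK)
  (HO_tree : is_subtree src dst VO EO)
  (HO_min : forall ET : {set E}, ET \subset EP :|: EK ->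
      is_subtree src dst (VP :|: VK) ET -> edge_cost c EO <= edge_cost c ET) :
  kpcst_feasible src dst r k VO EO /\
  (forall (VT : {set V}) (ET : {set E}), kpcst_feasible src dst r k VT ET ->
      pcst_cost c pi VO EO <= 4 * pcst_cost c pi VT ET).
Proof.
subst VO; split.
  split=> //; first by rewrite in_setU HP_root.
  by rewrite (leq_trans HK_size) // subset_leq_card // subsetUr.
move=> VT ET [T_tree T_root T_size].
have kmst_le : edge_cost c EK <= 2 * pcst_cost c pi VT ET.
  rewrite (le_trans (HK_apx _ _ T_tree T_root T_size)) // ler_wpM2l //.
  exact: edge_cost_le_pcst_cost.
rewrite (le_trans (pcst_cost_setU_le Hc Hpi VP VK HO_E)) //.
have -> : 4 = 2 + 2 :> R by rewrite -natrD.
by rewrite mulrDl lerD // HP_apx.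
Qed.
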